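(* Let $\mathbb{F}$ be a finite field. For every $k\in\mathbb{N}$ there exists a CMSO formula $\mathrm{LinCom}(\langle Z\rangle,\langle Y^1\rangle,\dots,\langle Y^k\rangle)$ over $\Sigma_{\mathbb{F}}$ such that for every matrix $A$ over $\mathbb{F}$ and all virtual columns $\langle L\rangle,\langle J^1\rangle,\dots,\langle J^k\rangle$ of $\mathcal{S}(A)$ we have $\mathcal{S}(A)\models\mathrm{LinCom}(\langle L\rangle,\langle J^1\rangle,\dots,\langle J^k\rangle)$ if and only if $v(\langle L\rangle)\in\mathrm{span}(v(\langle J^1\rangle),\dots,v(\langle J^k\rangle))$.
   Context: $\Sigma_{\mathbb{F}}$ has unary symbols $R,C$ and binary symbols $\mathrm{Entry}_\alpha$ ($\alpha\in\mathbb{F}$). For a matrix $A$ with rows $r_1,\dots,r_m$, $\mathcal{S}(A)$ has universe rows $\cup$ columns, $R$ = rows, $C$ = columns, $\mathrm{Entry}_\alpha=\{(r,c):A(r,c)=\alpha\}$. CMSO is monadic second-order logic with predicates $\mathrm{mod}_{a,b}(X)$ meaning $|X|\equiv a\pmod b$. A virtual column of $\mathcal{S}(A)$ is a family $\langle Q\rangle=\{Q_\alpha\}_{\alpha\in\mathbb{F}}$ of pairwise disjoint sets of rows whose union is the set of all rows; its vector $v(\langle Q\rangle)\in\mathbb{F}^m$ has $i$-th coordinate $\alpha$ where $r_i\in Q_\alpha$. In formulas, a virtual column variable $\langle Z\rangle$ is an $\mathbb{F}$-indexed tuple of set variables $\{Z_\alpha\}_{\alpha\in\mathbb{F}}$.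 *)

From HB Require Import structures.
From mathcomp Require Import all_boot all_order all_algebra all_field.
Set Implicit Arguments. Unset Strict Implicit. Unset Printing Implicit Defensive.
Import GRing.Theory.
Local Open Scope ring_scope.

(* ---------- Syntax of CMSO over Sigma_F ----------
   First-order variables and set variables are both indexed by nat
   (two separate name spaces). *)
Inductive cmso (F : Type) : Type :=
| CR    (x : nat)
| CC    (x : nat)
| CEntry (a : F) (x y : nat)
| CEq   (x y : nat)
| CIn   (x X : nat)
| CMod  (a b X : nat)
| CNot  (f : cmso F)
| CAnd  (f g : cmso F)
| CEx1  (x : nat) (f : cmso F)
| CEx2  (X : nat) (f : cmso F).

Definition univ (m n : nat) : finType := ('I_m + 'I_n)%type.

Definition is_row m n (u : univ m n) : bool := if u is inl _ then true else false.
Definition is_col m n (u : univ m n) : bool := if u is inr _ then true else false.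

Definition entry_rel (F : eqType) m n (A : 'M[F]_(m, n)) (a : F)
  (u v : univ m n) : bool :=
  match u, v with
  | inl i, inr j => A i j == a
  | _, _ => false
  end.

Definition upd (T : Type) (f : nat -> T) (x : nat) (t : T) : nat -> T :=
  fun y => if y == x then t else f y.

(* Satisfaction, with a first-order assignment (None = unassigned; atoms on
   unassigned variables are false) and a set assignment. *)
Fixpoint sat (F : eqType) m n (A : 'M[F]_(m, n)) (phi : cmso F)
  (nu : nat -> option (univ m n)) (sigma : nat -> {set univ m n}) : Prop :=
  match phi with
  | CR x => if nu x is Some u then is_row u else False
  | CC x => if nu x is Some u then is_col u else False
  | CEntry a x y =>
      match nu x, nu y with Some u, Some v => entry_rel A a u v | _, _ => False end
  | CEq x y => match nu x, nu y with Some u, Some v => u = v | _, _ => False end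
  | CIn x X => if nu x is Some u then u \in sigma X else False
  | CMod a b X => #|sigma X| = a %[mod b]
  | CNot f => ~ sat A f nu sigma
  | CAnd f g => sat A f nu sigma /\ sat A g nu sigma
  | CEx1 x f => exists u : univ m n, sat A f (upd nu x (Some u)) sigma
  | CEx2 X f => exists S : {set univ m n}, sat A f nu (upd sigma X S)
  end.

Definition is_vcol (F : finType) m n (Q : F -> {set univ m n}) : Prop :=
  (forall a b : F, a != b -> [disjoint Q a & Q b]) /\
  \bigcup_(a : F) Q a = [set u : univ m n | is_row u].

Definition vcol_vec (F : finFieldType) m n (Q : F -> {set univ m n}) : 'rV[F]_m :=
  \row_(i < m) odflt 0 [pick a : F | inl i \in Q a].

(* set-variable name for the a-component of the j-th virtual-column variable
   of LinCom (j = 0 : <Z>, j = i+1 : <Y^{i+1}>) *)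
Definition vvar (F : finType) (j : nat) (a : F) : nat :=
  j * #|F| + enum_rank a.

(* The formula guesses the coefficient vector c in F^k (a finite disjunction) and checks, row by row,
   every possible value pattern f of the rows of the Y^i: a row lying in Y^i_{f i} for all i must lie
   in Z_{sum_i c_i f_i}.  Since the components of a virtual column partition the rows, exactly one
   pattern applies to each row, so this says v(Z) = sum_i c_i v(Y^i). *)
From HB Require Import structures.
From mathcomp Require Import all_boot all_order all_algebra all_field.
From Stdlib Require Classical_Prop.
Set Implicit Arguments. Unset Strict Implicit. Unset Printing Implicit Defensive.
Import GRing.Theory.
Local Open Scope ring_scope.

Section DerivedConnectives.
Variable F : eqType.

Definition CTrue : cmso F := CMod F 0 1 0.
Definition CImp (f g : cmso F) : cmso F := CNot (CAnd f (CNot g)).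
Definition CAll (x : nat) (f : cmso F) : cmso F := CNot (CEx1 x (CNot f)).
Definition CBigAnd (T : finType) (G : T -> cmso F) : cmso F :=
  foldr (@CAnd F) CTrue [seq G t | t <- enum T].
Definition CBigOr (T : finType) (G : T -> cmso F) : cmso F :=
  CNot (CBigAnd (fun t => CNot (G t))).

Variables (m n : nat) (A : 'M[F]_(m, n)).
Implicit Types (nu : nat -> option (univ m n)) (sigma : nat -> {set univ m n}).

Lemma sat_CImp nu sigma f g :
  sat A (CImp f g) nu sigma <-> (sat A f nu sigma -> sat A g nu sigma).
Proof.
split=> /= [fg Hf | fg [Hf nHg]]; last exact: nHg (fg Hf).
by apply: Classical_Prop.NNPP => nHg; apply: fg.
Qed.

Lemma sat_CAll nu sigma x f :
  sat A (CAll x f) nu sigma <-> (forall u, sat A f (upd nu x (Some u)) sigma).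
Proof.
split=> /= [Hf u | Hf [u nHf]]; last exact: nHf (Hf u).
by apply: Classical_Prop.NNPP => nHf; apply: Hf; exists u.
Qed.

Lemma sat_foldr_CAnd (T : eqType) nu sigma (G : T -> cmso F) (s : seq T) :
  sat A (foldr (@CAnd F) CTrue [seq G t | t <- s]) nu sigma <->
  (forall t, t \in s -> sat A (G t) nu sigma).
Proof.
elim: s => [|t s IHs] /=; first by split=> // _; rewrite modn1 mod0n.
rewrite IHs; split=> [[Gt Gs] u | Gts].
  by rewrite inE => /predU1P [-> | /Gs].
by split=> [|u su]; apply: Gts; rewrite inE ?eqxx ?su ?orbT.
Qed.

Lemma sat_CBigAnd (T : finType) nu sigma (G : T -> cmso F) :
  sat A (CBigAnd G) nu sigma <-> (forall t, sat A (G t) nu sigma).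
Proof.
rewrite /CBigAnd sat_foldr_CAnd.
by split=> [Gt t | Gt t _]; [apply: Gt; rewrite mem_enum | apply: Gt].
Qed.

Lemma sat_CBigOr (T : finType) nu sigma (G : T -> cmso F) :
  sat A (CBigOr G) nu sigma <-> (exists t, sat A (G t) nu sigma).
Proof.
rewrite /CBigOr /= sat_CBigAnd; split=> [nAll | [t Gt] nG]; last exact: nG t Gt.
by apply: Classical_Prop.NNPP => nEx; apply: nAll => t Gt; apply: nEx; exists t.
Qed.

Lemma sat_CIn_upd nu sigma x X u :
  sat A (CIn F x X) (upd nu x (Some u)) sigma <-> u \in sigma X.
Proof. by rewrite /= /upd eqxx. Qed.

Lemma sat_CR_upd nu sigma x u :
  sat A (CR F x) (upd nu x (Some u)) sigma <-> is_row u.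
Proof. by rewrite /= /upd eqxx. Qed.

End DerivedConnectives.

Lemma mem_vcol (F : finFieldType) m n (Q : F -> {set univ m n}) (r : 'I_m) (a : F) :
  is_vcol Q -> (inl r \in Q a) = (vcol_vec Q 0 r == a).
Proof.
move=> [disjQ coverQ]; rewrite mxE; case: pickP => [b Qb | notQ] /=.
  apply/idP/eqP => [Qa | <- //]; apply/eqP; apply: contraT => neq_ba.
  by rewrite (disjointFr (disjQ _ _ neq_ba) Qb) in Qa.
have : (inl r : univ m n) \in \bigcup_a Q a by rewrite coverQ inE.
by case/bigcupP=> b _; rewrite notQ.
Qed.

Lemma submx_rowP (F : fieldType) k m (v : 'rV[F]_m) (M : 'M[F]_(k, m)) :
  reflect (exists c : {ffun 'I_k -> F}, v = \row_i c i *m M) (v <= M)%MS.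
Proof.
apply: (iffP submxP) => [[D ->] | [c ->]]; last by exists (\row_i c i).
by exists [ffun i => D 0 i]; congr (_ *m _); apply/rowP => i; rewrite !mxE ffunE.
Qed.

Section LinCom.
Variables (F : finFieldType) (k : nat).

Definition lincom_coeff_fml (c : {ffun 'I_k -> F}) : cmso F :=
  CAll 0 (CImp (CR F 0) (CBigAnd (fun f : {ffun 'I_k -> F} =>
    CImp (CBigAnd (fun i : 'I_k => CIn F 0 (vvar i.+1 (f i))))
         (CIn F 0 (vvar 0 (\sum_i c i * f i)))))).

Definition lincom_fml : cmso F := CBigOr lincom_coeff_fml.

Variables (m n : nat) (A : 'M[F]_(m, n)).
Variables (L : F -> {set univ m n}) (J : 'I_k -> F -> {set univ m n}).
Variables (nu : nat -> option (univ m n)) (sigma : nat -> {set univ m n}).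
Hypothesis sigmaL : forall a, sigma (vvar 0 a) = L a.
Hypothesis sigmaJ : forall (i : 'I_k) a, sigma (vvar i.+1 a) = J i a.

Lemma sat_lincom_coeff_fml c :
  sat A (lincom_coeff_fml c) nu sigma <->
  (forall (r : 'I_m) (f : {ffun 'I_k -> F}),
     (forall i, inl r \in J i (f i)) -> inl r \in L (\sum_i c i * f i)).
Proof.
rewrite sat_CAll; split=> [Hc r f Jf | Hc u].
  move/sat_CImp: (Hc (inl r)) => /(_ isT) /sat_CBigAnd /(_ f) /sat_CImp.
  rewrite sat_CIn_upd sigmaL; apply; apply/sat_CBigAnd => i.
  by rewrite sat_CIn_upd sigmaJ.
apply/sat_CImp; rewrite sat_CR_upd; case: u => // r _.
apply/sat_CBigAnd => f; rewrite sat_CImp sat_CBigAnd sat_CIn_upd sigmaL => Jf.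
by apply: Hc => i; have := Jf i; rewrite sat_CIn_upd sigmaJ.
Qed.

Hypotheses (vcolL : is_vcol L) (vcolJ : forall i, is_vcol (J i)).

Lemma vcol_vec_lincomP c :
  (forall (r : 'I_m) (f : {ffun 'I_k -> F}),
     (forall i, inl r \in J i (f i)) -> inl r \in L (\sum_i c i * f i)) <->
  vcol_vec L = \row_i c i *m \matrix_(i < k) vcol_vec (J i).
Proof.
have rowE r : (\row_i c i *m \matrix_(i < k) vcol_vec (J i)) 0 r =
              \sum_i c i * vcol_vec (J i) 0 r.
  by rewrite mxE; apply: eq_bigr => i _; rewrite !mxE.
split=> [Lc | /rowP Lc r f Jf].
  apply/rowP => r; rewrite rowE; apply/eqP; rewrite -mem_vcol //.
  have -> : \sum_i c i * vcol_vec (J i) 0 r =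
            \sum_i c i * [ffun i => vcol_vec (J i) 0 r] i.
    by apply: eq_bigr => i _; rewrite ffunE.
  by apply: Lc => i; rewrite ffunE mem_vcol.
rewrite mem_vcol // Lc rowE; apply/eqP/eq_bigr => i _.
by have := Jf i; rewrite mem_vcol // => /eqP ->.
Qed.

Lemma sat_lincom_fml :
  sat A lincom_fml nu sigma <-> (vcol_vec L <= \matrix_(i < k) vcol_vec (J i))%MS.
Proof.
rewrite sat_CBigOr; split=> [[c] | /submx_rowP [c Lc]]; last first.
  by exists c; apply/sat_lincom_coeff_fml/vcol_vec_lincomP.
by move/sat_lincom_coeff_fml/vcol_vec_lincomP => Lc; apply/submx_rowP; exists c.
Qed.

End LinCom.

Theorem lemma8 (F : finFieldType) (k : nat) :
  exists phi : cmso F,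
  forall (m n : nat) (A : 'M[F]_(m, n))
         (L : F -> {set univ m n}) (J : 'I_k -> F -> {set univ m n}),
    is_vcol L -> (forall i, is_vcol (J i)) ->
    forall (nu : nat -> option (univ m n)) (sigma : nat -> {set univ m n}),
      (forall a : F, sigma (vvar 0 a) = L a) ->
      (forall (i : 'I_k) (a : F), sigma (vvar i.+1 a) = J i a) ->
      (sat A phi nu sigma <->
       (vcol_vec L <= \matrix_(i < k) vcol_vec (J i))%MS).
Proof.
exists (lincom_fml F k) => m n A L J vcolL vcolJ nu sigma sigmaL sigmaJ.
exact: sat_lincom_fml.
Qed.
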